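(* Let $\bullet$ be the empty superscript, ''$\le1$'', or ''$1$'', and let $X$ be an $\mathsf{AP}_\bullet$-friendly space. For every nonempty closed subset $A$ of $\mathbb{P}^\bullet_{\mathsf P,wk}(X)$, $s^\bullet_{\mathsf{AP}}(r_{\mathsf{AP}}(A))$ is the closed convex hull of $A$ in $\mathbb{P}^\bullet_{\mathsf P,wk}(X)$, i.e. the smallest closed convex subset of $\mathbb{P}^\bullet_{\mathsf P,wk}(X)$ containing $A$.
   Context: $\overline{\mathbb{R}}_+=[0,+\infty]$ with the Scott topology. $\mathcal{L}X$: continuous maps $X\to\overline{\mathbb{R}}_+$, pointwise order, Scott topology, cone under pointwise operations; $\mathbf 1$ constant map $1$. A prevision is a Scott-continuous $F:\mathcal{L}X\to\overline{\mathbb{R}}_+$ with $F(ah)=aF(h)$; linear if additive, Hoare if sublinear; subnormalized if $F(\mathbf 1+h)\le1+F(h)$ for all $h$, normalized if equality. $\mathbb{P}^\bullet_{\mathsf P}(X)$: linear previsions with no condition / subnormalized / normalized per $\bullet$. Subscript $wk$: weak topology generated by $[h>r]=\{G\mid G(h)>r\}$. Convex: closed under $aG+(1-a)G'$, $a\in[0,1]$. $r_{\mathsf{AP}}(A)(h)=\sup_{G\in A}G(h)$; for a Hoare prevision $F$, $s^\bullet_{\mathsf{AP}}(F)=\{G\in\mathbb{P}^\bullet_{\mathsf P}(X)\mid G\le F\}$. A semitopological cone is locally convex (resp. locally convex-compact) if each point has a base of convex open (resp. convex compact) neighbourhoods; topological if operations are jointly continuous. LCS-complete: homeomorphic to a $G_\delta$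 subspace of a locally compact sober space. $X$ is $\mathsf{AP}$-friendly ($=\mathsf{AP}_{\le1}$-friendly) iff $\mathcal{L}X$ is a locally convex semitopological cone; $\mathsf{AP}_1$-friendly iff (1) $X$ compact and $\mathsf{AP}$-friendly, or (2) $\mathcal{L}X$ is a locally convex-compact, locally convex topological cone with sober topology, or (3) $X$ is LCS-complete. *)

From HB Require Import structures.
From mathcomp Require Import all_boot all_order all_algebra.
From mathcomp Require Import all_classical all_reals all_analysis borel_hierarchy.
Set Implicit Arguments. Unset Strict Implicit. Unset Printing Implicit Defensive.
Import Order.TTheory GRing.Theory Num.Theory.
Import numFieldNormedType.Exports.
Local Open Scope classical_set_scope.
Local Open Scope ring_scope.

Definition open_base_with (T : Type) (sp : set T) (opn : set T -> Prop)
  (P : set T -> Prop) :=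
  forall x U, sp x -> opn U -> U x ->
    exists V, [/\ opn V, P V, V x & V `<=` U].

Definition cover_compact (T : Type) (opn : set T -> Prop) (K : set T) :=
  forall Us : set (set T), Us `<=` opn -> K `<=` \bigcup_(U in Us) U ->
    exists s : seq (set T), (forall U, U \in s -> Us U) /\
      K `<=` \bigcup_(U in [set U | U \in s]) U.

Definition compact_base_with (T : Type) (sp : set T) (opn : set T -> Prop)
  (P : set T -> Prop) :=
  forall x U, sp x -> opn U -> U x ->
    exists K, [/\ P K, cover_compact opn K, K `<=` U &
      exists V, [/\ opn V, V x & V `<=` K]].

(* sobriety of the space [sp] with open sets [opn] (opn-sets are subsets of sp) *)
Definition closed_in (T : Type) (sp : set T) (opn : set T -> Prop) (C : set T) :=
  C `<=` sp /\ opn (sp `\` C).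
Definition irreducible_closed_in (T : Type) (sp : set T) (opn : set T -> Prop)
  (C : set T) :=
  [/\ closed_in sp opn C, C !=set0 &
    forall C1 C2, closed_in sp opn C1 -> closed_in sp opn C2 ->
      C `<=` C1 `|` C2 -> C `<=` C1 \/ C `<=` C2].
Definition point_closure_in (T : Type) (sp : set T) (opn : set T -> Prop) (x : T) :=
  [set y | sp y /\ forall U, opn U -> U y -> U x].
Definition sober_in (T : Type) (sp : set T) (opn : set T -> Prop) :=
  forall C, irreducible_closed_in sp opn C ->
    exists! x, sp x /\ C = point_closure_in sp opn x.

Definition sober_space (Y : topologicalType) :=
  sober_in [set: Y] (@open Y).
Definition locally_compact_space (Y : topologicalType) :=
  forall y (U : set Y), open U -> U y ->
    exists K V, [/\ compact K, open V, V y, V `<=` K & K `<=` U].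

Definition LCS_complete (X : topologicalType) :=
  exists (Y : topologicalType) (S : set Y) (f : X -> Y),
    [/\ locally_compact_space Y, sober_space Y, Gdelta S,
        [/\ injective f, range f = S & continuous f] &
        forall U : set X, open U -> exists V : set Y, open V /\ f @` U = V `&` S].

(* The cone LX of continuous maps X -> [0,+oo] (Scott topology on the   *)
(* target, whose open sets are {}, [0,+oo] and (r,+oo]).                *)

Definition isLX (R : realType) (X : topologicalType) (h : X -> \bar R) :=
  (forall x, (0 <= h x)%E) /\ forall r : R, open [set x | (r%:E < h x)%E].

Definition pw_le (R : realType) (X : Type) (h k : X -> \bar R) :=
  forall x, (h x <= k x)%E.

Definition directed_fam (R : realType) (X : topologicalType)
  (D : set (X -> \bar R)) :=
  [/\ D `<=` @isLX R X, D !=set0 &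
    forall h k, D h -> D k -> exists l, [/\ D l, pw_le h l & pw_le k l]].

Definition pw_sup (R : realType) (X : Type) (D : set (X -> \bar R)) :=
  fun x => ereal_sup [set d x | d in D].

Definition scal (R : realType) (X : Type) (a : R) (h : X -> \bar R) :=
  fun x => (a%:E * h x)%E.
Definition padd (R : realType) (X : Type) (h k : X -> \bar R) :=
  fun x => (h x + k x)%E.

Definition scott_open (R : realType) (X : topologicalType) (U : set (X -> \bar R)) :=
  [/\ U `<=` @isLX R X,
      forall h k, U h -> isLX k -> pw_le h k -> U k &
      forall D, directed_fam D -> U (pw_sup D) -> exists d, D d /\ U d].

(* Scott-open subsets of R_+ = [0,+oo) : {} , R_+ , (r,+oo) *)
Definition scottR_open (R : realType) (O : set R) :=
  forall a, 0 <= a -> O a -> exists r, r < a /\ forall b, 0 <= b -> r < b -> O b.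

Definition LX_convex (R : realType) (X : topologicalType) (V : set (X -> \bar R)) :=
  forall h k a, V h -> V k -> 0 <= a <= 1 -> V (padd (scal a h) (scal (1 - a) k)).

Definition LX_T0 (R : realType) (X : topologicalType) :=
  forall h k, isLX h -> isLX k ->
    (forall U, @scott_open R X U -> (U h <-> U k)) -> h = k.

Definition LX_semitopological (R : realType) (X : topologicalType) :=
  [/\ @LX_T0 R X,
      forall (h : X -> \bar R) U, isLX h -> scott_open U ->
        scott_open [set k | isLX k /\ U (padd h k)],
      forall a U, 0 <= a -> scott_open U ->
        scott_open [set k | isLX k /\ U (@scal R X a k)] &
      forall h U, isLX h -> scott_open U ->
        scottR_open [set a | 0 <= a /\ U (@scal R X a h)]].

Definition LX_topological (R : realType) (X : topologicalType) :=
  [/\ @LX_T0 R X,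
      forall (h k : X -> \bar R) U, isLX h -> isLX k -> scott_open U -> U (padd h k) ->
        exists V W, [/\ scott_open V, scott_open W, V h, W k &
          forall h' k', V h' -> W k' -> U (padd h' k')] &
      forall a h U, 0 <= a -> isLX h -> scott_open U -> U (@scal R X a h) ->
        exists r V, [/\ r < a, scott_open V, V h &
          forall b k, 0 <= b -> r < b -> V k -> U (scal b k)]].

Definition LX_locally_convex (R : realType) (X : topologicalType) :=
  open_base_with (@isLX R X) (@scott_open R X) (@LX_convex R X).

Definition LX_locally_convex_compact (R : realType) (X : topologicalType) :=
  compact_base_with (@isLX R X) (@scott_open R X) (@LX_convex R X).

(* Previsions.  A prevision is a map LX -> [0,+oo]; we represent it by a  *)
(* map F : (X -> \bar R) -> \bar R which is 0 outside LX (canonical       *)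
(* extension), so that sets of previsions are sets of such maps.          *)

Definition prevision (R : realType) (X : topologicalType)
  (F : (X -> \bar R) -> \bar R) :=
  [/\ forall h, ~ isLX h -> F h = 0%E,
      forall h k, isLX h -> isLX k -> pw_le h k -> (F h <= F k)%E,
      forall D, directed_fam D -> F (pw_sup D) = ereal_sup (F @` D) &
      forall a h, 0 <= a -> isLX h -> F (@scal R X a h) = (a%:E * F h)%E].

Definition linear_prev (R : realType) (X : topologicalType) F :=
  @prevision R X F /\
  forall h k, isLX h -> isLX k -> F (padd h k) = (F h + F k)%E.

Definition hoare_prev (R : realType) (X : topologicalType) F :=
  @prevision R X F /\
  forall h k, isLX h -> isLX k -> (F (padd h k) <= F h + F k)%E.

Definition subnormalized (R : realType) (X : topologicalType)
  (F : (X -> \bar R) -> \bar R) :=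
  forall h, isLX h -> (F (fun x => 1%E + h x) <= 1%E + F h)%E.
Definition normalized (R : realType) (X : topologicalType)
  (F : (X -> \bar R) -> \bar R) :=
  forall h, isLX h -> F (fun x => 1%E + h x) = (1%E + F h)%E.

Inductive bullet := BNone | BLe1 | BOne.

Definition Pb (R : realType) (X : topologicalType) (b : bullet) F :=
  @linear_prev R X F /\
  match b with
  | BNone => True
  | BLe1 => subnormalized F
  | BOne => normalized F
  end.

(* weak topology on P^bullet_P(X): generated by the subbasic sets
   [h > r] = {G | G h > r}; a set is open iff around each of its points it
   contains a finite intersection of subbasic sets *)
Definition wk_open (R : realType) (X : topologicalType) (b : bullet)
  (U : set ((X -> \bar R) -> \bar R)) :=
  U `<=` @Pb R X b /\
  forall G, U G -> exists s : seq ((X -> \bar R) * R),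
    [/\ forall p, p \in s -> isLX p.1,
        forall p, p \in s -> (p.2%:E < G p.1)%E &
        forall G', Pb b G' -> (forall p, p \in s -> (p.2%:E < G' p.1)%E) -> U G'].

Definition wk_closed (R : realType) (X : topologicalType) (b : bullet)
  (A : set ((X -> \bar R) -> \bar R)) :=
  A `<=` @Pb R X b /\ wk_open b (@Pb R X b `\` A).

Definition prev_convex (R : realType) (X : topologicalType)
  (A : set ((X -> \bar R) -> \bar R)) :=
  forall G G' (a : R), A G -> A G' -> 0 <= a <= 1 ->
    A (fun h => (a%:E * G h + (1 - a)%:E * G' h)%E).

Definition r_AP (R : realType) (X : topologicalType)
  (A : set ((X -> \bar R) -> \bar R)) : (X -> \bar R) -> \bar R :=
  fun h => ereal_sup [set G h | G in A].

Definition s_AP (R : realType) (X : topologicalType) (b : bullet)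
  (F : (X -> \bar R) -> \bar R) : set ((X -> \bar R) -> \bar R) :=
  [set G | @Pb R X b G /\ forall h, isLX h -> (G h <= F h)%E].

Definition AP_friendly (R : realType) (X : topologicalType) :=
  @LX_semitopological R X /\ @LX_locally_convex R X.

Definition AP_friendly_b (R : realType) (X : topologicalType) (b : bullet) :=
  match b with
  | BNone | BLe1 => @AP_friendly R X
  | BOne =>
      (compact [set: X] /\ @AP_friendly R X) \/
      [/\ @LX_locally_convex_compact R X, @LX_locally_convex R X,
          @LX_topological R X & sober_in (@isLX R X) (@scott_open R X)] \/
      LCS_complete X
  end.

(* A weak neighbourhood of [G] only involves finitely many [h_1, ..., h_n].  If a
   convex set [C] of linear previsions misses the neighbourhood [{G' | r_i < G' h_i}],
   its image under [G' |-> (G' h_i)_i] is a convex subset of [[0, +oo]^n] avoiding the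
   orthant above [(r_i)_i].  Induction on [n], with a planar separation argument at
   each step, yields a convex combination [h] of the [h_i] and a real [r] such that
   [G' h <= r] on [C] while [r < G h].  When [A] is contained in [C] this gives
   [r_AP A h <= r < G h], so no [G <= r_AP A] lies outside [C]. *)

From HB Require Import structures.
From mathcomp Require Import all_boot all_order all_algebra.
From mathcomp Require Import all_classical all_reals all_analysis borel_hierarchy.
From mathcomp Require Import ring lra.
Import Order.TTheory GRing.Theory Num.Theory.
Local Open Scope classical_set_scope.
Local Open Scope ring_scope.

Lemma segment_off_quadrant (R : realFieldType) (up vp uq vq : R) :
  0 < up -> 0 < vq ->
  (forall t, 0 <= t <= 1 ->
     t * up + (1 - t) * uq <= 0 \/ t * vp + (1 - t) * vq <= 0) ->
  vq * up <= uq * vp.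
Proof.
move=> up0 vq0 off.
have vp0 : vp <= 0 by case: (off 1); rewrite ?ler01 ?lexx //; lra.
have uq0 : uq <= 0 by case: (off 0); rewrite ?ler01 ?lexx //; lra.
rewrite leNgt; apply/negP => cross.
have up_gt_uq : 0 < up - uq by lra.
have vq_gt_vp : 0 < vq - vp by lra.
have a01 : 0 <= - uq / (up - uq) <= 1.
  by rewrite divr_ge0 ?ler_pdivrMr ?(ltW up_gt_uq) //=; lra.
have b01 : 0 <= vq / (vq - vp) <= 1.
  by rewrite divr_ge0 ?ler_pdivrMr ?(ltW vq_gt_vp) //=; lra.
(* the two coordinates change sign at [-uq / (up - uq)] and [vq / (vq - vp)];
   [cross] puts the first before the second, so both are positive in between *)
pose t := (- uq / (up - uq) + vq / (vq - vp)) / 2.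
have t01 : 0 <= t <= 1 by rewrite /t; lra.
case: (off t t01).
- have -> : t * up + (1 - t) * uq = (vq * up - uq * vp) / (2 * (vq - vp)).
    by rewrite /t; field; rewrite !gt_eqF.
  by rewrite leNgt divr_gt0 ?mulr_gt0 //; lra.
- have -> : t * vp + (1 - t) * vq = (vq * up - uq * vp) / (2 * (up - uq)).
    by rewrite /t; field; rewrite !gt_eqF.
  by rewrite leNgt divr_gt0 ?mulr_gt0 //; lra.
Qed.

Lemma convex_off_quadrant (R : realType) (S : set (R * R)) :
  (forall p q t, S p -> S q -> 0 <= t <= 1 ->
     S (t * p.1 + (1 - t) * q.1, t * p.2 + (1 - t) * q.2)) ->
  (forall p, S p -> p.1 <= 0 \/ p.2 <= 0) ->
  exists2 l, 0 <= l <= 1 & forall p, S p -> l * p.1 + (1 - l) * p.2 <= 0.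
Proof.
move=> Sconv off.
have [left_half|] := pselect (forall p, S p -> p.1 <= 0).
  by exists 1 => [|p Sp]; [lra | rewrite subrr mul0r addr0 mul1r; exact: left_half].
move=> /existsNP[p /not_implyP[Sp /negP]]; rewrite -ltNge => p1.
have [lower_half|] := pselect (forall p, S p -> p.2 <= 0).
  by exists 0 => [|q Sq]; [lra | rewrite subr0 mul0r add0r mul1r; exact: lower_half].
move=> /existsNP[q /not_implyP[Sq /negP]]; rewrite -ltNge => q2.
have off1 x : S x -> 0 < x.1 -> x.2 <= 0 by move=> Sx; case: (off x Sx); lra.
have off2 x : S x -> 0 < x.2 -> x.1 <= 0 by move=> Sx; case: (off x Sx); lra.
have cross x y : S x -> S y -> 0 < x.1 -> 0 < y.2 -> y.2 * x.1 <= y.1 * x.2.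
  move=> Sx Sy x1 y2; apply: segment_off_quadrant => // t t01.
  exact: off _ (Sconv _ _ _ Sx Sy t01).
(* [l] must lie above each [y.2 / (y.2 - y.1)] with [0 < y.2] and below each
   [- x.2 / (x.1 - x.2)] with [0 < x.1]; [cross] says this is possible *)
pose L := [set y.2 / (y.2 - y.1) | y in [set y | S y /\ 0 < y.2]].
have Lub x : S x -> 0 < x.1 -> ubound L (- x.2 / (x.1 - x.2)).
  move=> Sx x1 _ [y [Sy y2] <-].
  have := cross x y Sx Sy x1 y2.
  have := off1 x Sx x1; have := off2 y Sy y2 => y1 x2.
  rewrite ler_pdivrMr; last lra.
  by rewrite mulrAC ler_pdivlMr; lra.
have L0 : L !=set0 by exists (q.2 / (q.2 - q.1)), q.
have Lsup y : S y -> 0 < y.2 -> y.2 <= sup L * (y.2 - y.1).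
  move=> Sy y2; have := off2 y Sy y2 => y1.
  rewrite -ler_pdivrMr; last lra.
  by apply: ub_le_sup; [exists (- p.2 / (p.1 - p.2)); exact: Lub | exists y].
have supL x : S x -> 0 < x.1 -> sup L * (x.1 - x.2) <= - x.2.
  move=> Sx x1; have := off1 x Sx x1 => x2.
  rewrite -ler_pdivlMr; last lra.
  by apply: ge_sup => //; exact: Lub.
have q1 := off2 q Sq q2; have p2 := off1 p Sp p1.
have l0 : 0 <= sup L by have := Lsup q Sq q2; nra.
have l1 : sup L <= 1 by have := supL p Sp p1; nra.
exists (sup L) => [|x Sx]; first by rewrite l0 l1.
have [x2|x2] := ltP 0 x.2; first by have := Lsup x Sx x2; lra.
have [x1|x1] := ltP 0 x.1; first by have := supL x Sx x1; lra.
nra.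
Qed.

Lemma off_quadrant_infty {R : realType} {S : set (\bar R * \bar R)} {r0 r1 : R} {p q} :
  (forall x, S x -> 0 <= x.1 /\ 0 <= x.2)%E ->
  (forall x y t, S x -> S y -> 0 <= t <= 1 ->
     S (t%:E * x.1 + (1 - t)%:E * y.1, t%:E * x.2 + (1 - t)%:E * y.2)%E) ->
  (forall x, S x -> x.1 <= r0%:E \/ x.2 <= r1%:E)%E ->
  S p -> p.1 = +oo%E -> S q -> (q.2 <= r1%:E)%E.
Proof.
move=> S_ge0 S_convex S_off Sp p1 Sq; rewrite leNgt; apply/negP => q2.
have p2 : (p.2 <= r1%:E)%E by case: (S_off p Sp); rewrite // p1 leNgt ltey.
have [q1_ge0 _] := S_ge0 q Sq.
suff [t /andP[t0 t1] mix2] :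
    exists2 t, 0 < t <= 1 & (r1%:E < t%:E * p.2 + (1 - t)%:E * q.2)%E.
  have t01 : 0 <= t <= 1 by rewrite (ltW t0) t1.
  case: (S_off _ (S_convex p q t Sp Sq t01)) => /=; last by rewrite leNgt mix2.
  rewrite p1 gt0_muley ?lte_fin // addye ?leNgt ?ltey //.
  by rewrite gt_eqF // (lt_le_trans _ (mule_ge0 _ q1_ge0)) ?ltNy0 // lee_fin subr_ge0.
have [_ p2_ge0] := S_ge0 p Sp.
have /fineK p2E : p.2 \is a fin_num by rewrite ge0_fin_numE // (le_lt_trans p2) ?ltey.
move: p2; rewrite -p2E lee_fin; set y := fine p.2 => yr1.
move: q2; case: q.2 => [z zr1|_|//].
  rewrite lte_fin in zr1; have zy : 0 < z - y by lra.
  exists ((z - r1) / (2 * (z - y))).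
    by rewrite divr_gt0 ?mulr_gt0 ?ler_pdivrMr ?mulr_gt0 //=; lra.
  rewrite -!EFinM -EFinD lte_fin.
  have -> : (z - r1) / (2 * (z - y)) * y + (1 - (z - r1) / (2 * (z - y))) * z
      = z - (z - r1) / 2 by field; rewrite gt_eqF.
  lra.
exists (1 / 2); first lra.
by rewrite gt0_muley ?lte_fin ?addey ?ltey //; lra.
Qed.

Lemma ereal_convex_off_quadrant (R : realType) (S : set (\bar R * \bar R)) (r0 r1 : R) :
  (forall x, S x -> 0 <= x.1 /\ 0 <= x.2)%E ->
  (forall x y t, S x -> S y -> 0 <= t <= 1 ->
     S (t%:E * x.1 + (1 - t)%:E * y.1, t%:E * x.2 + (1 - t)%:E * y.2)%E) ->
  (forall x, S x -> x.1 <= r0%:E \/ x.2 <= r1%:E)%E ->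
  exists2 l, 0 <= l <= 1 & forall x, S x ->
    (l%:E * x.1 + (1 - l)%:E * x.2 <= (l * r0 + (1 - l) * r1)%:E)%E.
Proof.
move=> S_ge0 S_convex S_off.
have [left_half|] := pselect (forall x, S x -> (x.1 <= r0%:E)%E).
  exists 1 => [|x Sx]; first lra.
  by rewrite subrr mul0e mul0r adde0 addr0 mul1e mul1r; exact: left_half.
move=> /existsNP[p /not_implyP[Sp /negP]]; rewrite -ltNge => p1.
have [lower_half|] := pselect (forall x, S x -> (x.2 <= r1%:E)%E).
  exists 0 => [|x Sx]; first lra.
  by rewrite subr0 mul0e mul0r add0e add0r mul1e mul1r; exact: lower_half.
move=> /existsNP[q /not_implyP[Sq /negP]]; rewrite -ltNge => q2.
have S_fin x : S x -> x.1 \is a fin_num /\ x.2 \is a fin_num.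
  move=> Sx; have [x1 x2] := S_ge0 x Sx.
  rewrite !ge0_fin_numE // !ltey; split; apply/eqP => xoo.
    by have := off_quadrant_infty S_ge0 S_convex S_off Sx xoo Sq; rewrite leNgt q2.
  pose S' := [set (y.2, y.1) | y in S].
  suff : (p.1 <= r0%:E)%E by rewrite leNgt p1.
  apply: (@off_quadrant_infty R S' r1 r0 (x.2, x.1) (p.2, p.1)) => //.
  - by move=> _ [y Sy <-]; have [] := S_ge0 y Sy.
  - move=> _ _ t [y Sy <-] [z Sz <-] t01.
    by exists (t%:E * y.1 + (1 - t)%:E * z.1, t%:E * y.2 + (1 - t)%:E * z.2)%E;
      [exact: S_convex|].
  - by move=> _ [y Sy <-]; case: (S_off y Sy); [right|left].
  - by exists x.
  - by exists p.
pose T := [set (fine x.1 - r0, fine x.2 - r1) | x in S].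
have [l l01 Tl] : exists2 l, 0 <= l <= 1 &
    forall u, T u -> l * u.1 + (1 - l) * u.2 <= 0.
  apply: convex_off_quadrant.
  - move=> _ _ t [x Sx <-] [y Sy <-] t01.
    exists (t%:E * x.1 + (1 - t)%:E * y.1, t%:E * x.2 + (1 - t)%:E * y.2)%E.
      exact: S_convex.
    have [[x1 x2] [y1 y2]] := (S_fin x Sx, S_fin y Sy).
    rewrite -(fineK x1) -(fineK x2) -(fineK y1) -(fineK y2) -!EFinM -!EFinD /=.
    by congr pair; ring.
  - move=> _ [x Sx <-] /=; have [x1 x2] := S_fin x Sx.
    have := S_off x Sx; rewrite -(fineK x1) -(fineK x2) !lee_fin.
    by case=> ?; [left|right]; lra.
exists l => // x Sx; have [x1 x2] := S_fin x Sx.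
have := Tl _ (ex_intro2 _ _ x Sx erefl) => /=.
by rewrite -(fineK x1) -(fineK x2) -!EFinM -EFinD lee_fin; lra.
Qed.

Local Open Scope ereal_scope.

Lemma ge_ereal_supD (R : realType) (S1 S2 : set (\bar R)) (M : \bar R) :
  S1 !=set0 -> S2 !=set0 -> (forall x, S1 x -> 0 <= x) -> (forall y, S2 y -> 0 <= y) ->
  (forall x y, S1 x -> S2 y -> x + y <= M) -> ereal_sup S1 + ereal_sup S2 <= M.
Proof.
move=> [x0 S1x0] [y0 S2y0] S1_ge0 S2_ge0 bound.
case EM : M => [m| |]; last first.
- by have := le_trans (adde_ge0 (S1_ge0 _ S1x0) (S2_ge0 _ S2y0)) (bound _ _ S1x0 S2y0); rewrite EM.
- exact: leey.
have S2_fin y : S2 y -> y \is a fin_num.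
  move=> S2y; rewrite ge0_fin_numE ?S2_ge0 // (@le_lt_trans _ _ m%:E) ?ltey //.
  by rewrite -EM (le_trans _ (bound _ _ S1x0 S2y)) // leeDr ?S1_ge0.
have sup1_le y : S2 y -> ereal_sup S1 <= m%:E - y.
  by move=> S2y; apply: ge_ereal_sup => x S1x /=; rewrite leeBrDr ?S2_fin // -EM bound.
have sup1_fin : ereal_sup S1 \is a fin_num.
  rewrite ge0_fin_numE; last exact: le_trans (S1_ge0 _ S1x0) (ereal_sup_ubound S1x0).
  by rewrite (le_lt_trans (sup1_le _ S2y0)) // -(fineK (S2_fin _ S2y0)) -EFinB ltey.
rewrite -leeBrDl //; apply: ge_ereal_sup => y S2y /=.
by rewrite leeBrDl // -leeBrDr ?S2_fin ?sup1_le.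
Qed.

Lemma lte_convex_comb {R : realType} {x y : \bar R} {r0 r1 a : R} :
  r0%:E < x -> r1%:E < y -> (0 <= a <= 1)%R ->
  (a * r0 + (1 - a) * r1)%:E < a%:E * x + (1 - a)%:E * y.
Proof.
move=> r0x r1y /andP[a0 a1].
have [a_gt0|a_le0] := ltP 0%R a.
  rewrite EFinD !EFinM lte_leD ?lte_pmul2l //.
  by rewrite lee_wpmul2l ?lee_fin ?subr_ge0 // ltW.
have -> : a = 0%R by apply/le_anti/andP.
by rewrite !mul0r mul0e subr0 !mul1r mul1e add0r add0e.
Qed.

Lemma lte_EFin_between {R : realType} {x y : \bar R} :
  x < y -> exists r : R, x < r%:E < y.
Proof.
case: x => [a| |]; case: y => [c| |] //= xy.
- by exists ((a + c) / 2)%R; rewrite !lte_fin in xy *; apply/andP; split; lra.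
- by exists (a + 1)%R; rewrite ltry andbT lte_fin; lra.
- by exists (c - 1)%R; rewrite ltNyr lte_fin; lra.
- by exists 0%R; rewrite ltNyr ltry.
Qed.

Lemma open_const_set (X : topologicalType) (P : Prop) : open [set _ : X | P].
Proof.
have [p|np] := pselect P.
  have -> : [set _ : X | P] = setT by apply/seteqP; split=> x.
  exact: openT.
have -> : [set _ : X | P] = set0 by apply/seteqP; split=> x.
exact: open0.
Qed.

Section LX.
Context {R : realType} {X : topologicalType}.
Implicit Types (h k : X -> \bar R) (F : (X -> \bar R) -> \bar R).

Lemma isLX0 : isLX (fun _ : X => 0 : \bar R).
Proof. by split => // r; exact: open_const_set. Qed.

Lemma isLX_scal (a : R) h : (0 <= a)%R -> isLX h -> isLX (scal a h).
Proof.
move=> a0 [h0 ho]; split=> [x|r]; first by rewrite mule_ge0.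
have [ap|] := ltP 0%R a.
  rewrite (_ : [set x | _] = [set x | (a^-1 * r)%:E < h x]); first exact: ho.
  by apply/seteqP; split => x /=; rewrite /scal EFinM lte_pdivrMl.
rewrite le_eqVlt ltNge a0 orbF => /eqP a0'.
rewrite (_ : [set x | _] = [set _ | r%:E < 0]); first exact: open_const_set.
by apply/seteqP; split => x /=; rewrite /scal a0' mul0e.
Qed.

Lemma isLX_padd h k : isLX h -> isLX k -> isLX (padd h k).
Proof.
move=> [h0 ho] [k0 ko]; split=> [x|r]; first exact: adde_ge0.
rewrite (_ : [set x | _] = \bigcup_(s in [set: R])
    ([set x | s%:E < h x] `&` [set x | (r - s)%:E < k x])).
  by apply: bigcup_open => s _; exact: openI.
apply/seteqP; split => x /=; rewrite /padd; last first.
  by move=> [s _ [/= hs ks]]; rewrite -(subrKC s r) EFinD lteD.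
move=> hr; have := h0 x; have := k0 x.
move: hr; case E1 : (h x) => [a| |]; case E2 : (k x) => [c| |] //= hr k_ge0 _.
- rewrite -EFinD lte_fin in hr.
  by exists (a - (a + c - r) / 2)%R => //; split; rewrite /= ?E1 ?E2 lte_fin; lra.
- by exists (a - 1)%R => //; split; rewrite /= ?E1 ?E2 ?lte_fin ?ltey //; lra.
- exists (r + 1)%R => //; split; first by rewrite /= E1 ltey.
  by rewrite /= E2 (lt_le_trans _ k_ge0) // lte_fin; lra.
- by exists 0%R => //; split; rewrite /= ?E1 ?E2 ltey.
Qed.

Lemma prevision_ge0 {F h} : prevision F -> isLX h -> 0 <= F h.
Proof.
move=> [_ Fm _ Fh] hh; rewrite -(mul0e (F h)) -Fh ?lexx //.
apply: Fm => //; first exact: isLX_scal.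
by move=> x; rewrite /scal mul0e; case: hh.
Qed.

Lemma linear_prev_convex_comb F h0 h1 (l : R) :
  linear_prev F -> isLX h0 -> isLX h1 -> (0 <= l <= 1)%R ->
  F (padd (scal l h0) (scal (1 - l) h1)) = l%:E * F h0 + (1 - l)%:E * F h1.
Proof.
move=> [[_ _ _ Fh] FD] h0X h1X /andP[l0 l1].
have l1' : (0 <= 1 - l)%R by rewrite subr_ge0.
by rewrite FD ?Fh //; exact: isLX_scal.
Qed.

Section Mixture.
Variables (F F' : (X -> \bar R) -> \bar R) (a : R).
Hypothesis a01 : (0 <= a <= 1)%R.
Let mixF h := a%:E * F h + (1 - a)%:E * F' h.

Let a_ge0 : (0 <= a)%R. Proof. by case/andP: a01. Qed.
Let a'_ge0 : (0 <= 1 - a)%R. Proof. by case/andP: a01; rewrite subr_ge0. Qed.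
Local Hint Resolve a_ge0 a'_ge0 : core.

Lemma prevision_mix : prevision F -> prevision F' -> prevision mixF.
Proof.
move=> pF pF'; have [F0 Fm Fs Fh] := pF; have [F'0 F'm F's F'h] := pF'.
split.
- by move=> h hX; rewrite /mixF F0 // F'0 // !mule0 adde0.
- move=> h k hX kX hk; apply: leeD; apply: lee_wpmul2l; rewrite ?lee_fin //.
    exact: Fm.
  exact: F'm.
- move=> D Ddir; have [DX [d0 Dd0] Dup] := Ddir.
  rewrite /mixF Fs // F's //; apply/eqP; rewrite eq_le; apply/andP; split.
    rewrite -!ereal_supZl //; last 2 first.
    + by apply/set0P; exists (F' d0), d0.
    + by apply/set0P; exists (F d0), d0.
    apply: ge_ereal_supD.
    + by exists (a%:E * F d0), (F d0) => //; exists d0.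
    + by exists ((1 - a)%:E * F' d0), (F' d0) => //; exists d0.
    + by move=> _ [_ [d Dd <-] <-]; apply: mule_ge0; [|exact: prevision_ge0 pF (DX _ Dd)].
    + by move=> _ [_ [d Dd <-] <-]; apply: mule_ge0; [|exact: prevision_ge0 pF' (DX _ Dd)].
    move=> _ _ [_ [d1 Dd1 <-] <-] [_ [d2 Dd2 <-] <-].
    have [d3 [Dd3 d13 d23]] := Dup d1 d2 Dd1 Dd2.
    apply: le_trans (ereal_sup_ubound (ex_intro2 _ _ d3 Dd3 erefl)).
    apply: leeD; apply: lee_wpmul2l; rewrite ?lee_fin //.
      exact: Fm (DX _ Dd1) (DX _ Dd3) d13.
    exact: F'm (DX _ Dd2) (DX _ Dd3) d23.
  apply: ge_ereal_sup => _ [d Dd <-].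
  by rewrite leeD // lee_wpmul2l ?lee_fin //; apply: ereal_sup_ubound; exists d.
- move=> k h k0 hX; rewrite /mixF Fh // F'h // muleCA (muleCA (1 - a)%:E).
  by rewrite ge0_muleDr // mule_ge0 ?prevision_ge0.
Qed.

Lemma linear_prev_mix : linear_prev F -> linear_prev F' -> linear_prev mixF.
Proof.
move=> [pF FD] [pF' F'D]; split; first exact: prevision_mix.
move=> h k hX kX; rewrite /mixF FD // F'D //.
by rewrite !ge0_muleDr ?prevision_ge0 // addeACA.
Qed.

Lemma Pb_mix b : Pb b F -> Pb b F' -> Pb b mixF.
Proof.
move=> [lF Fb] [lF' F'b]; split; first exact: linear_prev_mix.
have [pF pF'] := (lF.1, lF'.1).
have mix1 : a%:E + (1 - a)%:E = 1 by rewrite -EFinD subrKC.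
case: b Fb F'b => // Fb F'b h hX; rewrite /mixF.
  rewrite (le_trans (leeD (lee_wpmul2l _ (Fb h hX)) (lee_wpmul2l _ (F'b h hX)))) ?lee_fin //.
  by rewrite !ge0_muleDr ?prevision_ge0 // !mule1 addeACA mix1.
by rewrite Fb // F'b // !ge0_muleDr ?prevision_ge0 // !mule1 addeACA mix1.
Qed.
End Mixture.
End LX.

Section WeakTopology.
Context {R : realType} {X : topologicalType}.
Local Notation prev := ((X -> \bar R) -> \bar R).

Lemma separate_from_weak_nbhd {s : seq ((X -> \bar R) * R)} {C : set prev} :
  C `<=` @linear_prev R X -> prev_convex C -> (forall p, p \in s -> isLX p.1) ->
  (forall G, C G -> exists2 p, p \in s & G p.1 <= p.2%:E) ->
  exists h (r : R), [/\ isLX h, forall G, C G -> G h <= r%:E &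
    forall G, linear_prev G -> (forall p, p \in s -> p.2%:E < G p.1) -> r%:E < G h].
Proof.
elim: s C => [|[h0 r0] s IH] C C_lin C_convex sX C_off.
  exists (fun _ => 0), (-1)%R; split; first exact: isLX0.
    by move=> G /C_off[].
  by move=> G [pG _] _; rewrite (lt_le_trans _ (prevision_ge0 pG isLX0)) ?lte_fin ?ltrN10.
have h0X : isLX h0 by apply: (sX (h0, r0)); rewrite mem_head.
pose C' := [set G | C G /\ r0%:E < G h0].
(* on [C], either [G h0 <= r0] or, by induction on [C'], [G h1 <= r1]; the planar
   lemma merges [h0] and [h1] into a single functional *)
have [h1 [r1 [h1X C'h1 s_h1]]] : exists h (r : R), [/\ isLX h,
    forall G, C' G -> G h <= r%:E &
    forall G, linear_prev G -> (forall p, p \in s -> p.2%:E < G p.1) -> r%:E < G h].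
  apply: IH.
  - by move=> G [/C_lin].
  - move=> G G' a [CG G0] [CG' G'0] a01; split; first exact: C_convex.
    by have := lte_convex_comb G0 G'0 a01; rewrite -mulrDl subrKC mul1r.
  - by move=> p ps; apply: sX; rewrite in_cons ps orbT.
  - move=> G [CG G0]; have [p] := C_off G CG.
    rewrite in_cons => /orP[/eqP -> /=|ps]; last by exists p.
    by rewrite leNgt G0.
have [l l01 Cl] : exists2 l, (0 <= l <= 1)%R & forall G, C G ->
    l%:E * G h0 + (1 - l)%:E * G h1 <= (l * r0 + (1 - l) * r1)%:E.
  have := @ereal_convex_off_quadrant R [set (G h0, G h1) | G in C] r0 r1.
  case=> [_ [G CG <-]|_ _ t [G CG <-] [G' CG' <-] t01|_ [G CG <-]|l l01 Sl].
  - by have [pG _] := C_lin G CG; rewrite !prevision_ge0.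
  - by exists (fun h => t%:E * G h + (1 - t)%:E * G' h); first exact: C_convex.
  - by have [G0|G0] := leP (G h0) r0%:E; [left|right; apply: C'h1].
  - by exists l => // G CG; apply: (Sl (G h0, G h1)); exists G.
have l0 : (0 <= l)%R by case/andP: l01.
have l'0 : (0 <= 1 - l)%R by case/andP: l01; rewrite subr_ge0.
exists (padd (scal l h0) (scal (1 - l) h1)), (l * r0 + (1 - l) * r1)%R; split.
- by apply: isLX_padd; exact: isLX_scal.
- by move=> G CG; rewrite linear_prev_convex_comb ?Cl //; exact: C_lin.
- move=> G lG s_G; rewrite linear_prev_convex_comb //; apply: lte_convex_comb => //.
    by apply: (s_G (h0, r0)); rewrite mem_head.
  by apply: s_h1 => // p ps; apply: s_G; rewrite in_cons ps orbT.
Qed.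

Lemma wk_closed_s_AP b (F : prev) : wk_closed b (s_AP b F).
Proof.
split=> [G []//|]; split=> [G []//|G [PG not_sG]].
have [h [hX FG]] : exists h, isLX h /\ F h < G h.
  apply: contra_notP not_sG => no_h; split=> // h hX.
  by rewrite leNgt; apply/negP => FG; apply: no_h; exists h.
have [r /andP[Fr rG]] := lte_EFin_between FG.
exists [:: (h, r)]; split=> [p|p|G' PG' G'r]; [by rewrite inE => /eqP-> ..|].
split=> // -[_ G'F]; have := G'F h hX.
by rewrite leNgt (lt_trans Fr (G'r (h, r) (mem_head _ _))).
Qed.

Lemma prev_convex_s_AP b (F : prev) : prev_convex (s_AP b F).
Proof.
move=> G G' a [PG GF] [PG' G'F] a01; split; first exact: Pb_mix.
have /andP[a0 a1] := a01.
move=> h hX; apply: le_trans (leeD (lee_wpmul2l _ (GF h hX)) (lee_wpmul2l _ (G'F h hX))) _;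
  rewrite ?lee_fin ?subr_ge0 //.
by rewrite -ge0_muleDl ?lee_fin ?subr_ge0 // -EFinD subrKC mul1e.
Qed.

Lemma sub_s_AP_r_AP b (A : set prev) : A `<=` Pb b -> A `<=` s_AP b (r_AP A).
Proof. by move=> APb G AG; split=> [|h _]; [exact: APb | apply: ereal_sup_ubound; exists G]. Qed.

Lemma s_AP_r_AP_minimal b (A C : set prev) :
  wk_closed b C -> prev_convex C -> A `<=` C -> s_AP b (r_AP A) `<=` C.
Proof.
move=> [CPb [_ C'open]] C_convex AC G [PG GA]; apply: contrapT => not_CG.
have [s [sX sG s_notC]] := C'open G (conj PG not_CG).
have C_off G' : C G' -> exists2 p, p \in s & G' p.1 <= p.2%:E.
  move=> CG'; apply: contrapT => no_p.
  have [] := s_notC G' (CPb _ CG') => [p ps|_ //].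
  by rewrite ltNge; apply/negP => G'p; apply: no_p; exists p.
have C_lin : C `<=` @linear_prev R X by move=> G' /CPb[].
have [h [r [hX Ch sh]]] := separate_from_weak_nbhd C_lin C_convex sX C_off.
have := sh G PG.1 sG; rewrite ltNge (le_trans (GA h hX)) //.
by apply: ge_ereal_sup => _ [G' AG' <-]; apply: Ch; exact: AC.
Qed.
End WeakTopology.

Theorem proposition4p19 (R : realType) (X : topologicalType) (b : bullet)
  (HX : AP_friendly_b R X b) (A : set ((X -> \bar R) -> \bar R)) :
  A !=set0 -> wk_closed b A ->
  [/\ wk_closed b (s_AP b (r_AP A)), prev_convex (s_AP b (r_AP A)),
      A `<=` s_AP b (r_AP A) &
      forall C, wk_closed b C -> prev_convex C -> A `<=` C ->
        s_AP b (r_AP A) `<=` C].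
Proof.
move=> _ [APb _]; split.
- exact: wk_closed_s_AP.
- exact: prev_convex_s_AP.
- exact: sub_s_AP_r_AP.
- by move=> C; exact: s_AP_r_AP_minimal.
Qed.
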